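(* For every positive integer $d$ there is a graph $G$ with boxicity $2$ and cubicity larger than $d$.
   Context: For a simple undirected graph $G$, the boxicity of $G$ is the smallest dimension $d$ such that $G$ is (isomorphic to) the intersection graph of a family of axis-aligned boxes in $\mathbb{R}^d$ (one box per vertex, two distinct vertices adjacent iff their boxes intersect). The cubicity of $G$ is the smallest dimension $d$ such that $G$ is the intersection graph of a family of axis-aligned hypercubes in $\mathbb{R}^d$, where the hypercubes may have arbitrary (not necessarily equal) side lengths. *)

From mathcomp Require Import all_boot.
From Stdlib Require Import Reals.
Set Implicit Arguments. Unset Strict Implicit. Unset Printing Implicit Defensive.

Definition simple_graph (T : finType) (e : rel T) : Prop :=
  symmetric e /\ irreflexive e.

Definition intervals_meet (a1 b1 a2 b2 : R) : Prop :=
  (a1 <= b2)%R /\ (a2 <= b1)%R.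

Definition box_rep (T : finType) (e : rel T) (d : nat) : Prop :=
  exists (lo hi : T -> 'I_d -> R),
    (forall v i, (lo v i <= hi v i)%R) /\
    (forall u v, u != v ->
       (e u v <-> forall i, intervals_meet (lo u i) (hi u i) (lo v i) (hi v i))).

(* A hypercube representation in R^d: vertex v gets the closed axis-aligned
   hypercube prod_{i < d} [lo v i, lo v i + s v] with side length s v >= 0
   (side lengths may differ between vertices). *)
Definition cube_rep (T : finType) (e : rel T) (d : nat) : Prop :=
  exists (lo : T -> 'I_d -> R) (s : T -> R),
    (forall v, (0 <= s v)%R) /\
    (forall u v, u != v ->
       (e u v <-> forall i,
          intervals_meet (lo u i) (lo u i + s u)%R (lo v i) (lo v i + s v)%R)).

Definition boxicity_eq (T : finType) (e : rel T) (k : nat) : Prop :=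
  box_rep e k /\ forall j, (j < k)%N -> ~ box_rep e j.

Definition cubicity_gt (T : finType) (e : rel T) (d : nat) : Prop :=
  forall j, (j <= d)%N -> ~ cube_rep e j.

(* The complete bipartite graph K_{n,n} is the witness. It has boxicity 2:
   put one side on vertical and the other on horizontal segments of a grid;
   it is not an interval graph since it contains an induced C_4.  Its
   cubicity grows with n: in a cube representation in R^d take the vertex v
   with the smallest cube.  Every cube of the other side meets that of v and
   is at least as large, so two of them whose lower corners lie in the same
   orthant relative to the lower corner of v must meet.  The other side being
   independent, it has at most 2^d vertices. *)
From mathcomp Require Import all_boot.
From Stdlib Require Import Reals Lra.

Set Implicit Arguments. Unset Strict Implicit.

Section Intervals.

Local Open Scope R_scope.

Lemma intervals_meet_C4 a1 b1 a2 b2 c1 d1 c2 d2 :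
  intervals_meet a1 b1 c1 d1 -> intervals_meet a1 b1 c2 d2 ->
  intervals_meet a2 b2 c1 d1 -> intervals_meet a2 b2 c2 d2 ->
  intervals_meet a1 b1 a2 b2 \/ intervals_meet c1 d1 c2 d2.
Proof.
rewrite /intervals_meet => ? ? ? ?.
by case: (Rle_dec a1 b2); case: (Rle_dec a2 b1) => ? ?;
  [left | right | right | right]; split; lra.
Qed.

Lemma intervals_meet_same_side a s b t c r :
  r <= s -> r <= t ->
  intervals_meet a (a + s) c (c + r) -> intervals_meet b (b + t) c (c + r) ->
  (a <= c <-> b <= c) -> intervals_meet a (a + s) b (b + t).
Proof.
rewrite /intervals_meet => ? ? ? ? [ab ba].
by case: (Rle_dec a c) => [/ab | /(contra_not ba)] ? ; split; lra.
Qed.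

End Intervals.

Lemma exists_minimizer (T : finType) (f : T -> R) :
  T -> exists v, forall u, (f v <= f u)%R.
Proof.
move=> x0.
have [v min_v] : exists v, forall u, u \in enum T -> (f v <= f u)%R.
  elim: (enum T) => [|a s [v min_v]]; first by exists x0.
  case: (Rle_dec (f a) (f v)) => [av | va]; [exists a | exists v] => u;
    by rewrite in_cons => /predU1P [-> | /min_v]; lra.
by exists v => u; apply: min_v; rewrite mem_enum.
Qed.

Section Representations.

Variables (T : finType) (e : rel T).

Lemma box_rep0_complete u v : box_rep e 0 -> u != v -> e u v.
Proof. by case=> lo [hi [_ rep]] uv; apply/(rep u v uv); case. Qed.

Lemma box_rep1_no_induced_C4 a1 a2 c1 c2 :
  irreflexive e -> box_rep e 1 -> a1 != a2 -> c1 != c2 ->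
  e a1 c1 -> e a1 c2 -> e a2 c1 -> e a2 c2 -> e a1 a2 || e c1 c2.
Proof.
move=> irr [lo [hi [_ rep]]] a12 c12.
have neq_adj x y : e x y -> x != y by apply: contraTneq => ->; rewrite irr.
have meet x y : e x y -> intervals_meet (lo x ord0) (hi x ord0) (lo y ord0) (hi y ord0).
  by move=> exy; apply: (rep x y (neq_adj x y exy)).1.
have adj x y : x != y ->
    intervals_meet (lo x ord0) (hi x ord0) (lo y ord0) (hi y ord0) -> e x y.
  by move=> xy m; apply/(rep x y xy) => i; rewrite (ord1 i).
move=> /meet m11 /meet m12 /meet m21 /meet m22.
have [m | m] := intervals_meet_C4 m11 m12 m21 m22; apply/orP.
- by left; apply: adj a12 m.
- by right; apply: adj c12 m.
Qed.

End Representations.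

Lemma pair_neq_r (A B : eqType) (a : A) (b b' : B) : b != b' -> (a, b) != (a, b').
Proof. by move=> bb'; rewrite xpair_eqE negb_and bb' orbT. Qed.

Definition complete_bipartite (T : finType) : rel (bool * T) :=
  fun u v => u.1 != v.1.

Section CompleteBipartite.

Variable T : finType.

Local Notation K := (@complete_bipartite T).

Lemma complete_bipartite_simple : simple_graph K.
Proof. by split=> [u v | u]; rewrite /complete_bipartite 1?eq_sym ?eqxx. Qed.

Lemma complete_bipartite_box_rep2 : box_rep K 2.
Proof.
pose r (k : T) := INR (enum_rank k); pose n := INR #|T|.
have r_bounds k : (0 <= r k <= n)%R.
  split; first exact: pos_INR.
  by apply/le_INR/leP; rewrite ltnW // -cardT ltn_ord.
pose degenerate (u : bool * T) (i : 'I_2) := u.1 == (i == ord0 :> 'I_2).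
exists (fun u i => if degenerate u i then r u.2 else 0%R).
exists (fun u i => if degenerate u i then r u.2 else n).
split=> [[b k] i | [b k] [b' k'] uv]; first by have := r_bounds k; case: ifP; lra.
have cross k0 k1 : intervals_meet (r k0) (r k0) 0 n /\ intervals_meet 0 n (r k1) (r k1).
  by have := r_bounds k0; have := r_bounds k1; rewrite /intervals_meet; lra.
have r_inj : injective r by move=> k0 k1 /INR_eq/ord_inj/enum_rank_inj.
rewrite /complete_bipartite /=; split=> [bb' i | meet].
  case: b b' bb' {uv} => -[] //= _; case: i => -[|[|//]] ? /=;
  by rewrite /degenerate /=; have [] := cross k k'.
move: uv meet; case: (eqVneq b b') => [<- | //] uv meet.
suff k'k : k' = k by rewrite k'k eqxx in uv.
apply: r_inj; have := meet (if b then ord0 else ord_max).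
by rewrite /degenerate; case: b {uv meet} => /= -[? ?]; lra.
Qed.

Lemma complete_bipartite_not_interval : (1 < #|T|)%N -> ~ box_rep K 1.
Proof.
case/card_gt1P=> k0 [k1 [_ _ k01]] rep.
have := box_rep1_no_induced_C4 complete_bipartite_simple.2 rep
  (pair_neq_r true k01) (pair_neq_r false k01).
by rewrite /complete_bipartite /= => /(_ isT isT isT isT).
Qed.

Lemma complete_bipartite_not_box_rep0 : (1 < #|T|)%N -> ~ box_rep K 0.
Proof.
case/card_gt1P=> k0 [k1 [_ _ k01]] rep.
by have := box_rep0_complete rep (pair_neq_r true k01).
Qed.

(* [expn], since importing Reals rebinds [^] in [nat_scope] to [Nat.pow]. *)
Lemma complete_bipartite_cube_rep_card j : cube_rep K j -> (#|T| <= expn 2 j)%N.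
Proof.
case: (posnP #|T|) => [-> // | /card_gt0P [k0 _]] [lo [s [_ rep]]].
have [v min_v] := exists_minimizer s (true, k0).
have meet_v k i : intervals_meet (lo (~~ v.1, k) i) (lo (~~ v.1, k) i + s (~~ v.1, k))%R
                                 (lo v i) (lo v i + s v)%R.
  have ne : (~~ v.1, k) != v by case: v {min_v} => -[] ?; rewrite xpair_eqE.
  by move: i; apply/(rep _ _ ne); rewrite /complete_bipartite /=; case: (v.1).
pose orthant k : {ffun 'I_j -> bool} := [ffun i => is_left (Rle_dec (lo (~~ v.1, k) i) (lo v i))].
suff orthant_inj : injective orthant.
  by have := leq_card orthant orthant_inj; rewrite card_ffun card_bool card_ord.
move=> k k' /ffunP same_orthant; apply/eqP/contraT => kk'.
have ne := pair_neq_r (~~ v.1) kk'.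
have /negbTE <- : ~~ K (~~ v.1, k) (~~ v.1, k') by rewrite /complete_bipartite /= eqxx.
apply/(rep _ _ ne) => i.
apply: (intervals_meet_same_side (min_v _) (min_v _) (meet_v k i) (meet_v k' i)).
by move: (same_orthant i); rewrite !ffunE; do 2 case: Rle_dec.
Qed.

End CompleteBipartite.

Theorem theorem6 : forall d : nat, (0 < d)%N ->
  exists (T : finType) (e : rel T),
    simple_graph e /\ boxicity_eq e 2 /\ cubicity_gt e d.
Proof.
move=> d _.
pose T := 'I_(expn 2 d).+1.
have card_T : #|T| = (expn 2 d).+1 by rewrite card_ord.
have two_le_T : (1 < #|T|)%N by rewrite card_T ltnS expn_gt0.
exists (bool * T)%type, (@complete_bipartite T).
split; first exact: complete_bipartite_simple.
split; first split.
- exact: complete_bipartite_box_rep2.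
- case=> [|[|//]] _.
  + exact: complete_bipartite_not_box_rep0.
  + exact: complete_bipartite_not_interval.
- move=> j le_jd /complete_bipartite_cube_rep_card.
  by rewrite card_T ltn_geF // ltnS leq_pexp2l.
Qed.
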